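(* Let $G$ be a finite abelian group, $H\le G$, and let $m_I\ge0$ be integers for $I\le H$. Let $A=\coprod_{I\le H}\coprod_{m_I}G/I$ (the disjoint union of $m_I$ copies of $G/I$ for each $I\le H$) and let $\mathrm{Pr}:A\to G/H$ be the $G$-map given on each copy of $G/I$ by the natural projection $gI\mapsto gH$. Let $S$ be the set of maps $s:G/H\to A$ with $\mathrm{Pr}\circ s=\mathrm{id}_{G/H}$, with $G$-action $({}^g s)(x)=g\,s(g^{-1}x)$, and for $s\in S$ let $G_s$ be its stabilizer. Then for every $K\le G$, $$\#\{s\in S\mid K\le G_s\}=\Big(\sum_{K\cap H\le I\le H}m_I\,|H:I|\Big)^{|G:KH|}.$$ Consequently, the numbers $c(K)=\#\{s\in S\mid G_s=K\}$ satisfy $c(K)=\big(\sum_{K\cap H\le I\le H}m_I|H:I|\big)^{|G:KH|}-\sum_{K<L\le G}c(L)$.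
   Context: $G$-sets are finite sets with a left action of the finite group $G$; $G/I$ denotes the set of left cosets with the left multiplication action. $|H:I|$ is the index, and $KH$ the subgroup generated by $K$ and $H$ (a product since $G$ is abelian). *)

From HB Require Import structures.
From mathcomp Require Import all_boot all_order all_fingroup.
Set Implicit Arguments. Unset Strict Implicit. Unset Printing Implicit Defensive.
Local Open Scope group_scope.

(* Copy labels: a copy of G/I is labelled by (I, j) with j < m I. *)
Definition copyT (gT : finGroupType) (m : {group gT} -> nat) : finType :=
  {I : {group gT} & 'I_(m I)}.

(* Elements of A are pairs (label (I,j), left coset C of I in G). *)
Definition Aelt (gT : finGroupType) (m : {group gT} -> nat) : finType :=
  (copyT m * {set gT})%type.

Definition inA (gT : finGroupType) (G H : {set gT}) (m : {group gT} -> nat)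
  (a : Aelt m) : bool :=
  (tag a.1 \subset H) && (a.2 \in lcosets (tag a.1) G).

(* The projection Pr : A -> G/H, xI |-> xH (= (xI) H as I <= H). *)
Definition Pr (gT : finGroupType) (H : {set gT}) (m : {group gT} -> nat)
  (a : Aelt m) : {set gT} := a.2 * H.

Definition actA (gT : finGroupType) (m : {group gT} -> nat) (g : gT)
  (a : Aelt m) : Aelt m := (a.1, g *: a.2).

(* Maps G/H -> A are encoded as finite functions on {set gT}, with value
   None outside G/H (= lcosets H G) and Some a on G/H. *)
Definition secT (gT : finGroupType) (m : {group gT} -> nat) : finType :=
  {ffun {set gT} -> option (Aelt m)}.

Definition is_section (gT : finGroupType) (G H : {set gT})
  (m : {group gT} -> nat) (s : secT m) : bool :=
  [forall C : {set gT},
     if C \in lcosets H G then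
       match s C with
       | Some a => inA G H a && (Pr H a == C)
       | None => false
       end
     else s C == None].

Definition S (gT : finGroupType) (G H : {set gT}) (m : {group gT} -> nat)
  : {set secT m} := [set s | is_section G H s].

Definition actS (gT : finGroupType) (G H : {set gT}) (m : {group gT} -> nat)
  (g : gT) (s : secT m) : secT m :=
  [ffun C => if C \in lcosets H G then omap (actA g) (s (g^-1 *: C)) else None].

Definition stabS (gT : finGroupType) (G H : {set gT}) (m : {group gT} -> nat)
  (s : secT m) : {set gT} := [set g in G | actS G H g s == s].

Definition cnt (gT : finGroupType) (G H : {set gT}) (m : {group gT} -> nat)
  (K : {set gT}) : nat := #|[set s in S G H m | stabS G H s == K]|.

From HB Require Import structures.
From mathcomp Require Import all_boot all_order all_fingroup.
Set Implicit Arguments. Unset Strict Implicit. Unset Printing Implicit Defensive.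

(* Put J = KH and N = \sum_(K :&: H <= I <= H) m_I |H : I|.  A section s is
   fixed by K iff it is K-equivariant.  As G is abelian, the K-orbits on G/H
   are exactly the fibres of G/H -> G/J, and the stabilizer in K of any coset
   rH is K :&: H.  Hence a K-equivariant section is determined by its values
   at one chosen coset (repr D) H in each D in G/J, and the value there may
   be any point of the fibre of Pr over (repr D) H that is fixed by K :&: H;
   conversely every such choice extends uniquely by equivariance.  In a copy
   of G/I those fixed points are the cosets yI inside rH with K :&: H <= I,
   and there are |H : I| of them; so there are N^|G : J| fixed sections.
   The formula for c(K) follows by partitioning the K-fixed sections
   according to their stabilizer, which is a subgroup L with K <= L <= G. *)

Lemma card_family_prod (aT rT : finType) (F : aT -> pred rT) :
  #|(family F : simpl_pred {ffun aT -> rT})| = (\prod_(x : aT) #|F x|)%N.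
Proof.
rewrite card_family /image_mem -[in RHS]big_enum /=.
elim: (enum aT) => [|x s IH] /=; first by rewrite big_nil.
by rewrite big_cons IH cardE.
Qed.

Section Cosets.

Local Open Scope group_scope.

Variable gT : finGroupType.
Implicit Types (G H I J : {group gT}) (C D : {set gT}).

Lemma lcosets_lcoset G H g C :
  g \in G -> C \in lcosets H G -> g *: C \in lcosets H G.
Proof.
move=> Gg /lcosetsP[x Gx ->]; apply/lcosetsP; exists (g * x).
  by rewrite groupM.
by rewrite lcosetM.
Qed.

Lemma lcosets_repr G J D :
  J \subset G -> D \in lcosets J G -> repr D \in G /\ D = repr D *: J.
Proof.
move=> sJG /lcosetsP[y Gy ->].
have : repr (y *: J) \in y *: J.
  by apply: (@mem_repr _ _ y); rewrite mem_lcoset mulVg group1.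
move=> rD; split; last by apply/esym/lcoset_eqP.
by move/lcosetP: rD => [j Jj ->]; rewrite groupM // (subsetP sJG).
Qed.

Lemma lcoset_mulSG H J x : H \subset J -> (x *: H) * J = x *: J.
Proof. by move=> sHJ; rewrite -mulgA mulSGid. Qed.

Lemma lcosets_mulSG G H J C :
  H \subset J -> C \in lcosets H G -> C * J \in lcosets J G.
Proof.
move=> sHJ /lcosetsP[x Gx ->]; rewrite lcoset_mulSG //.
by apply/lcosetsP; exists x.
Qed.

(* Over a coset rH, the cosets of I <= H in G lying in rH are the r-translates
   of the cosets of I in H; there are |H : I| of them. *)
Lemma card_cosets_over G H I r : I \subset H -> H \subset G -> r \in G ->
  #|[set C in lcosets I G | C * H == r *: H]| = #|H : I|.
Proof.
move=> sIH sHG Gr.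
suff -> : [set C in lcosets I G | C * H == r *: H] = (fun C => r *: C) @: lcosets I H.
  by rewrite card_imset ?card_lcosets //; apply: lcoset_inj.
apply/setP => C; rewrite inE; apply/andP/imsetP.
- case=> /lcosetsP[y Gy ->]; rewrite lcoset_mulSG // => /eqP E.
  have yrH : y \in r *: H by rewrite -E mem_lcoset mulVg group1.
  exists ((r^-1 * y) *: I); last by rewrite -lcosetM mulKVg.
  by apply/lcosetsP; exists (r^-1 * y); rewrite // -mem_lcoset.
- case=> D /lcosetsP[h Hh ->] ->; rewrite -lcosetM; split.
    by apply/lcosetsP; exists (r * h); rewrite // groupM // (subsetP sHG).
  by rewrite lcoset_mulSG // lcosetM lcoset_id.
Qed.

End Cosets.

Section AbelianCosets.

Local Open Scope group_scope.

Variables (gT : finGroupType) (G : {group gT}).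
Hypothesis abG : abelian G.
Implicit Types (I : {group gT}) (X C : {set gT}).

Definition fixed_by X C : bool := [forall k in X, k *: C == C].

Lemma lcoset_fixed I y k : I \subset G -> y \in G -> k \in G ->
  (k *: (y *: I) == y *: I) = (k \in I).
Proof.
move=> sIG Gy Gk; rewrite -lcosetM (centsP abG k Gk y Gy) lcosetM.
apply/eqP/idP => [/lcoset_inj E | kI]; last by rewrite lcoset_id.
by rewrite -E mem_lcoset mulVg group1.
Qed.

Lemma fixed_by_coset X I y :
  X \subset G -> I \subset G -> y \in G -> fixed_by X (y *: I) = (X \subset I).
Proof.
move=> sXG sIG Gy; apply/forall_inP/subsetP => [fixX k Xk | sXI k Xk].
  by rewrite -(lcoset_fixed sIG Gy (subsetP sXG k Xk)) fixX.
by rewrite (lcoset_fixed sIG Gy (subsetP sXG k Xk)) sXI.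
Qed.

End AbelianCosets.

Section SectionAction.

Local Open Scope group_scope.

Variables (gT : finGroupType) (m : {group gT} -> nat).

Lemma card_label (I : {group gT}) : #|[set u : copyT m | tag u == I]| = m I.
Proof.
suff -> : [set u : copyT m | tag u == I] =
    [set Tagged (fun J : {group gT} => 'I_(m J)) j | j : 'I_(m I)].
  by rewrite card_imset ?card_ord //; apply: eq_from_Tagged.
apply/setP => u; rewrite inE; apply/eqP/imsetP => [E | [j _ ->]] //.
by exists (etagged E); rewrite ?etaggedK.
Qed.

Lemma sum_over_labels (F : {group gT} -> nat) :
  (\sum_(u : copyT m) F (tag u) = \sum_(I : {group gT}) m I * F I)%N.
Proof.
rewrite (partition_big (fun u : copyT m => tag u) xpredT) //=.
apply: eq_bigr => I _; under eq_bigr => u /eqP -> do [].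
rewrite sum_nat_const -(card_label I); congr (_ * _)%N.
by apply: eq_card => u; rewrite inE.
Qed.

Lemma actA1 (a : Aelt m) : actA 1 a = a.
Proof. by case: a => u C; rewrite /actA lcoset1. Qed.

Lemma actAM g h (a : Aelt m) : actA (g * h) a = actA g (actA h a).
Proof. by case: a => u C; rewrite /actA lcosetM. Qed.

Variables (G H : {group gT}).

Lemma section_in s C : s \in S G H m -> C \in lcosets H G ->
  exists a, [/\ s C = Some a, inA G H a & Pr H a = C].
Proof.
rewrite inE => /forallP /(_ C) + XC; rewrite XC.
by case: (s C) => // a /andP[ia /eqP pa]; exists a.
Qed.

Lemma section_out s C : s \in S G H m -> C \notin lcosets H G -> s C = None.
Proof. by rewrite inE => /forallP /(_ C) + XC; rewrite (negbTE XC) => /eqP. Qed.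

Lemma actS_in g (s : secT m) (C : {set gT}) :
  C \in lcosets H G -> actS G H g s C = omap (actA g) (s (g^-1 *: C)).
Proof. by move=> XC; rewrite ffunE XC. Qed.

Lemma stabS_group s : s \in S G H m -> group_set (stabS G H s).
Proof.
move=> Ss; apply/group_setP; split.
  rewrite inE group1; apply/eqP/ffunP => C; rewrite ffunE invg1 lcoset1.
  case: ifP => XC; last by rewrite (section_out Ss) ?XC.
  by case: (s C) => // a; rewrite /= actA1.
move=> g h; rewrite !inE => /andP[Gg /eqP Eg] /andP[Gh /eqP Eh].
rewrite groupM //; apply/eqP/ffunP => C; rewrite ffunE.
case: ifP => XC; last by rewrite (section_out Ss) ?XC.
have XgC : g^-1 *: C \in lcosets H G by rewrite lcosets_lcoset ?groupV.
rewrite invMg lcosetM -{2}Eg actS_in // -{2}Eh actS_in //.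
by case: (s _) => //= a; rewrite actAM.
Qed.

Lemma fixed_section_equivariant (K : {group gT}) s :
  K \subset G -> s \in S G H m ->
  (K \subset stabS G H s) <->
  (forall k C, k \in K -> C \in lcosets H G -> s (k *: C) = omap (actA k) (s C)).
Proof.
move=> sKG Ss; split.
  move=> /subsetP sKstab k C Kk XC; have := sKstab k Kk.
  rewrite inE => /andP[Gk /eqP {1}<-].
  by rewrite actS_in ?lcosetK // lcosets_lcoset.
move=> equi; apply/subsetP => k Kk; have Gk := subsetP sKG k Kk.
rewrite inE Gk; apply/eqP/ffunP => C; rewrite ffunE.
case: ifP => XC; last by rewrite (section_out Ss) ?XC.
by rewrite -equi ?lcosetKV // lcosets_lcoset ?groupV.
Qed.

Lemma card_fixed_by_stabilizer (K : {group gT}) : K \subset G ->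
  #|[set s in S G H m | K \subset stabS G H s]| =
  (\sum_(L : {group gT} | (K \subset L) && (L \subset G)) cnt G H m L)%N.
Proof.
move=> sKG; pose stab (s : secT m) : {group gT} := insubd 1%G (stabS G H s).
have stabE s : s \in S G H m -> stab s = stabS G H s :> {set gT}.
  by move=> Ss; rewrite /stab insubdK //; apply: stabS_group.
rewrite -sum1_card (partition_big stab
  (fun L : {group gT} => (K \subset L) && (L \subset G))); last first.
  move=> s; rewrite inE => /andP[Ss sKs]; rewrite stabE // sKs /=.
  by apply/subsetP => g; rewrite inE => /andP[].
apply: eq_bigr => L /andP[sKL _]; rewrite /cnt -sum1_card; apply: eq_bigl => s.
rewrite !inE; have [Ss|] //= := boolP (s \in S G H m); last first.
  by rewrite inE => /negbTE ->.
rewrite -val_eqE /= stabE //.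
by case: eqP => [->|]; rewrite ?sKL ?andbT ?andbF.
Qed.

End SectionAction.

Section FixedSections.

Local Open Scope group_scope.

Variables (gT : finGroupType) (G H K : {group gT}) (m : {group gT} -> nat).
Hypotheses (abG : abelian G) (sHG : H \subset G) (sKG : K \subset G).

Local Notation J := (K <*> H)%G.

(* J = KH is a subgroup of G, and a product since G is abelian. *)
Lemma sJG : J \subset G. Proof. by rewrite join_subG sKG sHG. Qed.

Lemma joinKH : (J : {set gT}) = K * H.
Proof. by apply/comm_joingE/centC/(subset_trans sKG)/(subset_trans abG)/centS. Qed.

(* Every coset C of H is a K-translate of the chosen coset (repr (C J)) H
   of its J-coset (J = KH and G is abelian). *)
Lemma coset_in_join_orbit C : C \in lcosets H G ->
  exists2 k, k \in K & C = k *: (repr (C * J) *: H).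
Proof.
move=> /lcosetsP[x Gx ->]; rewrite lcoset_mulSG ?joing_subr //.
have : repr (x *: J) \in x *: J.
  by apply: (@mem_repr _ _ x); rewrite mem_lcoset mulVg group1.
move/lcosetP=> [j]; rewrite joinKH => /mulsgP[k h Kk Hh ->] ->.
have Gk := subsetP sKG k Kk.
exists k^-1; first by rewrite groupV.
rewrite -!lcosetM; apply/lcoset_eqP.
by rewrite mem_lcoset [x * (k * h)]mulgA (centsP abG x Gx k Gk) !mulgA mulVg
  mul1g invMg mulgKV groupV.
Qed.

Lemma join_coset_translate k C : k \in K -> C \in lcosets H G ->
  (k *: C) * J = C * J.
Proof.
move=> Kk /lcosetsP[x Gx ->]; have Gk := subsetP sKG k Kk.
rewrite -lcosetM !lcoset_mulSG ?joing_subr // (centsP abG k Gk x Gx) lcosetM.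
by rewrite [k *: J]lcoset_id // (subsetP (joing_subl K H)).
Qed.

Lemma chosen_coset D : D \in lcosets J G ->
  [/\ repr D \in G, repr D *: H \in lcosets H G & (repr D *: H) * J = D].
Proof.
move=> JD; have [Gr ED] := lcosets_repr sJG JD; split => //.
  by apply/lcosetsP; exists (repr D).
by rewrite lcoset_mulSG ?joing_subr.
Qed.

Lemma actA_fixed k k' r (a : Aelt m) : k \in K -> k' \in K -> r \in G ->
  k *: (r *: H) = k' *: (r *: H) -> fixed_by (K :&: H) a.2 ->
  actA k a = actA k' a.
Proof.
move=> Kk Kk' Gr E /forall_inP fixa.
have Gk := subsetP sKG k Kk; have Gk' := subsetP sKG k' Kk'.
have Hk : k'^-1 * k \in H.
  by rewrite -(lcoset_fixed abG sHG Gr) ?groupM ?groupV // lcosetM E lcosetK.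
have KHk : k'^-1 * k \in K :&: H by rewrite inE groupM ?groupV // Kk Kk'.
have /eqP := fixa _ KHk; rewrite lcosetM => fixk.
by rewrite /actA -[in RHS]fixk lcosetKV.
Qed.

Definition fixed_fibre (r : gT) : {set Aelt m} :=
  [set a | [&& inA G H a, Pr H a == r *: H & fixed_by (K :&: H) a.2]].

Definition fixed_fibre_size : nat :=
  (\sum_(I : {group gT} | (K :&: H \subset I) && (I \subset H)) m I * #|H : I|)%N.

Lemma fixed_fibre_copy r (u : copyT m) : r \in G ->
  [set C | (u, C) \in fixed_fibre r] =
  if (K :&: H \subset tag u) && (tag u \subset H)
  then [set C in lcosets (tag u) G | C * H == r *: H] else set0.
Proof.
move=> Gr; apply/setP => C; rewrite !inE /inA /Pr /=.
have [sIH|] := boolP (tag u \subset H); last by rewrite andbF inE.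
rewrite andbT; have sIG := subset_trans sIH sHG.
have [XC|nXC] := boolP (C \in lcosets (tag u) G); last first.
  by case: ifP => _; rewrite !inE ?(negbTE nXC).
have /lcosetsP[y Gy EC] := XC; rewrite EC in XC *.
have sKHG : K :&: H \subset G by rewrite subIset ?sKG.
rewrite (fixed_by_coset abG sKHG sIG Gy).
by case: (K :&: H \subset tag u); rewrite !inE ?XC /= ?andbT ?andbF.
Qed.

Lemma card_fixed_fibre r : r \in G -> #|fixed_fibre r| = fixed_fibre_size.
Proof.
move=> Gr; rewrite -sum1_card big_mkcond /=.
have -> : (\sum_(a : Aelt m) (if a \in fixed_fibre r then 1 else 0) =
    \sum_(u : copyT m) #|[set C | (u, C) \in fixed_fibre r]|)%N.
  transitivity (\sum_(u : copyT m) \sum_(C : {set gT})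
                  (if (u, C) \in fixed_fibre r then 1 else 0))%N.
    by rewrite pair_big; apply: eq_bigr => -[u C].
  apply: eq_bigr => u _; rewrite -sum1_card [RHS]big_mkcond.
  by apply: eq_bigr => C _; rewrite inE.
under eq_bigr => u _ do rewrite fixed_fibre_copy //.
rewrite (sum_over_labels m (fun I : {group gT} =>
  #|if (K :&: H \subset I) && (I \subset H)
    then [set C in lcosets I G | C * H == r *: H] else set0|)).
rewrite /fixed_fibre_size [RHS]big_mkcond; apply: eq_bigr => I _.
by case: ifP => [/andP[_ sIH]|_]; rewrite ?card_cosets_over ?cards0 ?muln0.
Qed.


Local Notation Fix := [set s in S G H m | K \subset stabS G H s].

Definition choices (D : {set gT}) : pred (option (Aelt m)) :=
  if D \in lcosets J G then [pred o | o \in Some @: fixed_fibre (repr D)]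
  else pred1 None.

Local Notation admissible := (family choices).

Lemma card_choices D :
  #|choices D| = if D \in lcosets J G then fixed_fibre_size else 1%N.
Proof.
rewrite /choices; case: ifP => [JD|_]; last exact: card1.
have [Gr _ _] := chosen_coset JD.
rewrite -(card_fixed_fibre Gr) -(card_imset _ (@Some_inj _)).
by apply: eq_card => o; rewrite inE.
Qed.

Lemma admissible_in f D : f \in admissible -> D \in lcosets J G ->
  exists2 a, f D = Some a & a \in fixed_fibre (repr D).
Proof.
move=> /familyP /(_ D); rewrite /choices => + JD; rewrite JD inE.
by case/imsetP=> a fa ->; exists a.
Qed.

Lemma admissible_out f D : f \in admissible -> D \notin lcosets J G ->
  f D = None.
Proof.
move=> /familyP /(_ D); rewrite /choices => + nJD.
by rewrite (negbTE nJD) inE => /eqP.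
Qed.

Definition restrict (s : secT m) : secT m :=
  [ffun D => if D \in lcosets J G then s (repr D *: H) else None].

Lemma restrict_admissible s : s \in Fix -> restrict s \in admissible.
Proof.
rewrite inE => /andP[Ss /(fixed_section_equivariant sKG Ss) equi].
apply/familyP => D; rewrite /choices ffunE; case: ifP => [JD|_]; last first.
  by rewrite inE.
have [Gr XC _] := chosen_coset JD.
have [a [sa ia pa]] := section_in Ss XC; rewrite sa inE mem_imset //; last exact: Some_inj.
rewrite inE ia pa eqxx /=; apply/forall_inP => k; rewrite inE => /andP[Kk Hk].
have fixC : k *: (repr D *: H) = repr D *: H.
  by apply/eqP; rewrite (lcoset_fixed abG sHG Gr) ?(subsetP sKG).
by have := equi k _ Kk XC; rewrite fixC sa => -[{2}->]; case: a {sa ia pa}.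
Qed.

Lemma restrict_inj : {in Fix &, injective restrict}.
Proof.
move=> s1 s2 /setIdP[S1 /(fixed_section_equivariant sKG S1) equi1].
move=> /setIdP[S2 /(fixed_section_equivariant sKG S2) equi2] E.
apply/ffunP => C; have [XC|nXC] := boolP (C \in lcosets H G); last first.
  by rewrite (section_out S1) ?(section_out S2).
have JD := lcosets_mulSG (joing_subr K H) XC.
have [_ XrC _] := chosen_coset JD.
have [k Kk ->] := coset_in_join_orbit XC.
have := congr1 (fun f : secT m => f (C * J)) E; rewrite /= !ffunE JD.
by move=> ErC; rewrite (equi1 k) // (equi2 k) // ErC.
Qed.

Definition extend (f : secT m) : secT m :=
  [ffun C => if C \in lcosets H G then
     if [pick k in K | C == k *: (repr (C * J) *: H)] is Some k
     then omap (actA k) (f (C * J)) else None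
   else None].

Lemma extend_value f C : f \in admissible -> C \in lcosets H G ->
  exists a, exists2 k, k \in K &
    [/\ f (C * J) = Some a, a \in fixed_fibre (repr (C * J)),
        C = k *: (repr (C * J) *: H) & extend f C = Some (actA k a)].
Proof.
move=> adf XC; have JD := lcosets_mulSG (joing_subr K H) XC.
have [a fa fixa] := admissible_in adf JD.
rewrite ffunE XC; case: pickP => [k /andP[Kk /eqP EC] | none].
  by exists a; exists k => //; split => //; rewrite fa.
by have [k Kk EC] := coset_in_join_orbit XC; have := none k; rewrite Kk -EC eqxx.
Qed.

Lemma extend_section f : f \in admissible -> extend f \in S G H m.
Proof.
move=> adf; rewrite inE; apply/forallP => C; case: ifP => XC; last first.
  by rewrite ffunE XC.
have [a [k Kk [_ fixa EC ->]]] := extend_value adf XC.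
move: fixa; rewrite inE => /and3P[/andP[sIH Xa] /eqP pa _].
rewrite /inA /Pr /= sIH lcosets_lcoset ?(subsetP sKG) //=.
by rewrite -mulgA; rewrite /Pr in pa; rewrite pa -EC.
Qed.

Lemma extend_fixed f : f \in admissible -> extend f \in Fix.
Proof.
move=> adf; have Ss := extend_section adf; rewrite inE Ss /=.
apply/(fixed_section_equivariant sKG Ss) => k0 C Kk0 XC.
have XkC := lcosets_lcoset (subsetP sKG k0 Kk0) XC.
have [a [k Kk [fa fixa EC ->]]] := extend_value adf XC.
have [a' [k' Kk' []]] := extend_value adf XkC.
rewrite join_coset_translate // fa => -[<-] _ EkC -> /=; congr Some.
have [Gr _ _] := chosen_coset (lcosets_mulSG (joing_subr K H) XC).
rewrite -actAM; apply: (actA_fixed (r := repr (C * J))); rewrite ?groupM //.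
  by rewrite -EkC lcosetM -EC.
by move: fixa; rewrite inE => /and3P[].
Qed.

Lemma restrict_extend f : f \in admissible -> restrict (extend f) = f.
Proof.
move=> adf; apply/ffunP => D; rewrite ffunE; case: ifP => JD; last first.
  by rewrite admissible_out ?JD.
have [Gr XC ED] := chosen_coset JD.
have [a [k Kk [fa fixa EC ->]]] := extend_value adf XC.
move: fa fixa EC; rewrite ED => -> fixa EC; congr Some.
rewrite -[RHS]actA1; apply: (actA_fixed (r := repr D)) => //.
  by rewrite -EC lcoset1.
by move: fixa; rewrite inE => /and3P[].
Qed.

Lemma card_fixed_sections : #|Fix| = (fixed_fibre_size ^ #|G : J|)%N.
Proof.
rewrite -(card_in_imset restrict_inj).
have -> : #|restrict @: Fix| = #|(admissible : simpl_pred (secT m))|.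
  apply: eq_card => f; apply/imsetP/idP => [[s Fs ->] | adf].
    exact: restrict_admissible.
  by exists (extend f); rewrite ?restrict_extend ?extend_fixed.
rewrite card_family_prod; under eq_bigr => D _ do rewrite card_choices.
by rewrite -big_mkcond prod_nat_const card_lcosets.
Qed.

End FixedSections.

Theorem corollary7 (gT : finGroupType) (G H : {group gT})
  (m : {group gT} -> nat) (hG : abelian G) (hH : H \subset G) :
  forall K : {group gT}, K \subset G ->
    #|[set s in S G H m | K \subset stabS G H s]| =
      (\sum_(I : {group gT} | (K :&: H \subset I) && (I \subset H))
          m I * #|H : I|%g) ^ #|G : K <*> H|%g
    /\
    cnt G H m K =
      (\sum_(I : {group gT} | (K :&: H \subset I) && (I \subset H))
          m I * #|H : I|%g) ^ #|G : K <*> H|%g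
      - \sum_(L : {group gT} | (K \proper L) && (L \subset G)) cnt G H m L.
Proof.
move=> K sKG; have fixedE := card_fixed_sections m hG hH sKG.
split; first exact: fixedE.
rewrite -fixedE card_fixed_by_stabilizer // (bigD1 K) ?subxx //=.
suff -> : \sum_(L : {group gT} | (K \subset L) && (L \subset G) && (L != K))
            cnt G H m L =
          \sum_(L : {group gT} | (K \proper L) && (L \subset G)) cnt G H m L.
  by rewrite addnK.
apply: eq_bigl => L; rewrite properEneq eq_sym -val_eqE /=.
by case: (K != L); rewrite ?andbT ?andbF.
Qed.
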